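(* Let $p$ be a prime, let $\mathcal{F}$ be a saturated fusion system on a finite $p$-group $S$, and let $\Omega$ be a characteristic biset for $\mathcal{F}$. Consider the square matrix \[ \bigl( |P\backslash \Omega /Q| \bigr)_{P,Q}, \] whose rows and columns are indexed by the $\mathcal{F}$-conjugacy classes of subgroups of $S$ (with $P,Q$ representatives) and whose $(P,Q)$-entry is the number of $(P,Q)$-orbits of $\Omega$ (orbits of $P\times Q$ acting by $(u,v)\cdot x=uxv^{-1}$). Then the rank of this matrix (over $\mathbb{Q}$) is equal to the number of $\mathcal{F}$-conjugacy classes of cyclic subgroups of $S$.
   Context: A saturated fusion system $\mathcal{F}$ on a finite $p$-group $S$ is a category whose objects are the subgroups of $S$ and whose morphisms are injective group homomorphisms, containing conjugations by elements of $S$, closed under restriction and inverses, and satisfying the Broto–Levi–Oliver saturation axioms. $P,P'\leq S$ are $\mathcal{F}$-conjugate if some morphism of $\mathcal{F}$ is an isomorphism $P\to P'$. An $(S,S)$-biset is a finite set with commuting left and right $S$-actions; it is viewed as a left $S\times S$-set via $(s,t)\cdot x = sxt^{-1}$. A left $S$-set $X$ is $\mathcal{F}$-stable if for every $P\leq S$ and every morphism $\varphi\colon P\to S$ in $\mathcal{F}$, the $P$-sets obtained by restricting the $S$-action along the inclusion $P\hookrightarrow S$ and along $\varphi$ are isomorphic. An $(S,S)$-biset is $\mathcal{F}$-stable if, as a left $S\times S$-set, it is $(\mathcal{F}\times\mathcal{F})$-stable (i.e. stable under restriction along $\varphi$ on the left and $\psi$ on the right for $\mathcal{F}$-morphisms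 $\varphi,\psi$). It is $\mathcal{F}$-generated if every isotropy subgroup of the left $S\times S$-action is of the form $\Delta(P,\varphi)=\{(u,\varphi(u))\mid u\in P\}$ with $P\leq S$ and $\varphi\colon P\to S$ in $\mathcal{F}$. A characteristic biset for $\mathcal{F}$ is a finite $(S,S)$-biset $\Omega$ that is $\mathcal{F}$-stable, $\mathcal{F}$-generated, and such that $|\Omega|/|S|$ is not divisible by $p$. *)

From HB Require Import structures.
From mathcomp Require Import all_boot all_order all_algebra all_fingroup all_solvable.
Set Implicit Arguments. Unset Strict Implicit. Unset Printing Implicit Defensive.
Import GroupScope.

(* A fusion system F on S is encoded by the boolean predicate
   [homF P phi] : "phi (restricted to P) is a morphism P -> S of F".
   Hom_F(P,Q) = { phi | homF P phi /\ phi(P) <= Q }. *)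

Section Fusion.
Variable gT : finGroupType.
Variable S : {group gT}.
Variable homF : {set gT} -> {ffun gT -> gT} -> bool.

Definition fcomp (psi phi : {ffun gT -> gT}) : {ffun gT -> gT} :=
  [ffun x => psi (phi x)].

Definition fconj (s : gT) : {ffun gT -> gT} := [ffun x => x ^ s].

Definition Fconj (P Q : {set gT}) : bool :=
  [exists phi : {ffun gT -> gT}, homF P phi && (phi @: P == Q)].

Definition is_fusion_system : Prop :=
      (forall P phi, homF P phi ->
         [/\ group_set P, P \subset S, {in P &, {morph phi : x y / x * y}},
             {in P &, injective phi} & phi @: P \subset S]) /\
  [/\
      (forall P phi (psi : {ffun gT -> gT}), homF P phi -> {in P, phi =1 psi} -> homF P psi),
      (forall (P : {group gT}) s, P \subset S -> s \in S -> homF P (fconj s)),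
      (forall P Q phi (psi : {ffun gT -> gT}), homF P phi -> homF Q psi -> phi @: P \subset Q ->
         homF P (fcomp psi phi)),
      (forall (P Q : {group gT}) phi, homF P phi -> Q \subset P -> homF Q phi) &
      (forall P phi, homF P phi ->
         exists psi : {ffun gT -> gT}, homF (phi @: P) psi && [forall x in P, psi (phi x) == x])].

Definition fully_normalized (P : {set gT}) : bool :=
  [forall Q : {group gT}, Fconj P Q ==> (#|'N_S(Q)| <= #|'N_S(P)|)].

Definition fully_centralized (P : {set gT}) : bool :=
  [forall Q : {group gT}, Fconj P Q ==> (#|'C_S(Q)| <= #|'C_S(P)|)].

Definition AutF (P : {set gT}) : {set {perm gT}} :=
  [set a in Aut P | homF P [ffun x => a x]].

Definition AutS (P : {set gT}) : {set {perm gT}} :=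
  [set a in Aut P | [exists g in 'N_S(P), [forall x in P, a x == x ^ g]]].

(* N_phi = { g in N_S(P) | phi c_g phi^-1 in Aut_S(phi(P)) } *)
Definition Nphi (P : {set gT}) (phi : {ffun gT -> gT}) : {set gT} :=
  [set g in 'N_S(P) |
     [exists s in S, [forall x in P, phi (x ^ g) == (phi x) ^ s]]].

Definition saturated_fusion_system (p : nat) : Prop :=
  [/\ is_fusion_system,
      (forall P : {group gT}, P \subset S -> fully_normalized P ->
         fully_centralized P /\ p.-Sylow(AutF P) (AutS P)) &
      (forall (P : {group gT}) phi, homF P phi ->
         fully_centralized (phi @: P) ->
         exists psi : {ffun gT -> gT}, homF (Nphi P phi) psi && [forall x in P, psi x == phi x])].

(* (S,S)-bisets, encoded as actions of S x S.  MathComp actions are right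
   actions; the left S x S-action (s,t).x = s x t^-1 corresponds to the right
   action x.(s,t) = s^-1 x t, which has the same orbits, isotropy groups and
   isomorphisms of restricted sets. *)
Variable Omega : finType.
Variable to : action (setX S S) Omega.

Definition prodf (phi psi : {ffun gT -> gT}) (g : gT * gT) : gT * gT :=
  (phi g.1, psi g.2).

Definition Delta (P : {set gT}) (phi : {ffun gT -> gT}) : {set gT * gT} :=
  [set (u, phi u) | u in P].

Definition F_stable_biset : Prop :=
  forall (P Q : {group gT}) phi psi, homF P phi -> homF Q psi ->
    exists f : Omega -> Omega, bijective f /\
      forall x g, g \in setX P Q -> f (to x g) = to (f x) (prodf phi psi g).

Definition F_generated_biset : Prop :=
  forall x : Omega, exists P phi, homF P phi /\
    'C_(setX S S)[x | to] = Delta P phi.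

Definition characteristic_biset (p : nat) : Prop :=
  [/\ F_stable_biset, F_generated_biset & ~~ (p %| #|Omega| %/ #|S|)].

Definition norbits (P Q : {set gT}) : nat :=
  #|[set orbit to (setX P Q) x | x : Omega]|.

Definition Fclass_transversal (reps : seq {group gT}) : Prop :=
  [/\ all (fun P : {group gT} => P \subset S) reps,
      (forall Q : {group gT}, Q \subset S -> has (fun P : {group gT} => Fconj Q P) reps) &
      (forall i j, i < size reps -> j < size reps ->
         Fconj (nth 1%G reps i) (nth 1%G reps j) -> i = j)].

Definition orbit_matrix (reps : seq {group gT}) : 'M[rat]_(size reps) :=
  \matrix_(i, j) ((norbits (nth 1%G reps i) (nth 1%G reps j))%:R)%R.

Definition cyclic_subgroups : {set {group gT}} :=
  [set Q : {group gT} | (Q \subset S) && cyclic Q].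

Definition n_cyclic_Fclasses : nat :=
  #|[set [set R : {group gT} in cyclic_subgroups | Fconj Q R] | Q : {group gT} in cyclic_subgroups]|.

End Fusion.

From HB Require Import structures.
From mathcomp Require Import all_boot all_order all_algebra all_fingroup all_solvable.
From mathcomp Require Import ring.
Import GroupScope.

(* By the Cauchy-Frobenius lemma, |P\Omega/Q| |P| |Q| counts the triples (u, v, x) with
   u in P, v in Q and x fixed by (u, v).  Grouping v by the cyclic subgroup <v> and using
   F-stability, this count depends on <v> only through its F-class, so the orbit matrix
   factors as X * Y through the F-classes of cyclic subgroups, where
   X_(P,C) = |{(u, v, x) | u in P, <v> = C, x fixed by (u, v)}| / |P| and
   Y_(C,Q) = |{D <= Q | D F-conjugate to C}| / |Q|.
   Restricted to the cyclic representatives, both are triangular for the order of the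
   subgroups with nonzero diagonal.  For Y this is clear.  For X, F-generation shows that a
   fixed point of (u, v) forces <u> and <v> to be F-conjugate, and the diagonal entries are
   nonzero because the right action of S on Omega is free, so it has |Omega|/|S| orbits, a
   number prime to p; hence the p-group <u> x 1 fixes some right orbit, i.e. some x is
   fixed by a pair (u, v). *)

Set Implicit Arguments.
Unset Strict Implicit.
Unset Printing Implicit Defensive.

Section LinearAlgebra.
Import GRing.Theory Num.Theory.
Local Open Scope ring_scope.

Lemma natr_div_neq0 (F : numFieldType) (m n : nat) :
  (0 < n)%N -> (m%:R / n%:R != 0 :> F) = (0 < m)%N.
Proof. by rewrite mulf_eq0 invr_eq0 !pnatr_eq0 lt0n => /negPf->; rewrite orbF lt0n. Qed.

Section WeightTriangular.
Variables (F : fieldType) (n : nat) (A : 'M[F]_n) (w : 'I_n -> nat).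
Hypothesis A_triangular : forall a b, A a b != 0 -> a != b -> (w a < w b)%N.
Hypothesis A_diag : forall a, A a a != 0.

Lemma row_free_weight_triangular : row_free A.
Proof.
apply: inj_row_free => z zA0; apply/rowP => a; rewrite mxE.
elim: {a}(w a).+1 {-2}a (ltnSn (w a)) => [//|N IH] a lt_aN.
have /eqP := congr1 (fun M : 'rV_n => M 0 a) zA0; rewrite !mxE (bigD1 a) //=.
rewrite big1 ?addr0 => [|b nba]; first by rewrite mulf_eq0 (negPf (A_diag a)) orbF => /eqP.
have [-> | nzA] := eqVneq (A b a) 0; first by rewrite mulr0.
by rewrite IH ?mul0r // (leq_trans (A_triangular nzA nba)).
Qed.

End WeightTriangular.

Lemma row_free_colsub (F : fieldType) m n (g : 'I_m -> 'I_n) (A : 'M[F]_(m, n)) :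
  row_free (colsub g A) -> row_free A.
Proof.
rewrite /row_free !eqn_leq !rank_leq_row /= => /leq_trans-> //.
by rewrite -mxrank_tr trmx_mxsub -[leqRHS]mxrank_tr mxrankS ?rowsub_sub.
Qed.

End LinearAlgebra.

Lemma mulg_pair (gT : finGroupType) (a b c d : gT) : (a, b) * (c, d) = (a * c, b * d).
Proof. by []. Qed.

Lemma sum_by_cycles (gT : finGroupType) (Q : {group gT}) (F : gT -> nat) :
  \sum_(v in Q) F v =
  \sum_(D : {group gT} | cyclic D && (D \subset Q)) \sum_(v | generator D v) F v.
Proof.
rewrite (partition_big (fun v => <[v]>%G) (fun D : {group gT} => cyclic D && (D \subset Q))).
  apply: eq_bigr => D /andP[_ sDQ]; apply: eq_bigl => v; rewrite /generator eq_sym.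
  apply/andP/eqP => [[_ /eqP-> //] | defD]; split; last by apply/eqP/val_inj.
  by rewrite (subsetP sDQ) // defD cycle_id.
by move=> v Qv; rewrite cycle_cyclic cycle_subG.
Qed.

Section FusionSystem.
Variables (gT : finGroupType) (S : {group gT}).
Variable homF : {set gT} -> {ffun gT -> gT} -> bool.
Hypothesis fusF : is_fusion_system S homF.

Section Morphisms.
Variables (P : {set gT}) (phi : {ffun gT -> gT}).
Hypothesis hP : homF P phi.

Lemma hom_group : group_set P. Proof. by case: fusF => /(_ _ _ hP)[]. Qed.
Lemma hom_morph : {in P &, {morph phi : x y / x * y}}.
Proof. by case: fusF => /(_ _ _ hP)[]. Qed.
Lemma hom_inj : {in P &, injective phi}. Proof. by case: fusF => /(_ _ _ hP)[]. Qed.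

Let G := Group hom_group.
Let f : {morphism G >-> gT} := Morphism hom_morph.
Let injf : 'injm f. Proof. exact/injmP/hom_inj. Qed.

Lemma hom1 : phi 1 = 1. Proof. exact: (morph1 f). Qed.

Lemma hom_cycle x : x \in P -> phi @: <[x]> = <[phi x]>.
Proof. by move=> Px; rewrite -(morphim_cycle f Px) morphimEsub ?cycle_subG. Qed.

Lemma card_hom_im : #|phi @: P| = #|P|.
Proof. by rewrite -(card_injm injf (subxx G)) morphimEdom. Qed.

Lemma hom_generator : phi @: [set v | generator P v] = [set y | generator (phi @: P) y].
Proof.
have fP : f @* G = phi @: P by rewrite morphimEdom.
apply/setP=> y; rewrite inE -fP; apply/imsetP/idP => [[v] | genPy].
  rewrite inE => genPv ->; have Pv : v \in P by rewrite (eqP genPv) cycle_id.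
  by rewrite (injm_generator injf).
have /morphimP[v Pv _ yE] : y \in f @* G by rewrite (eqP genPy) cycle_id.
rewrite yE (injm_generator injf) // in genPy.
by exists v; rewrite // inE.
Qed.

End Morphisms.

Lemma fconj1E (x : gT) : fconj 1 x = x.
Proof. by rewrite ffunE conjg1. Qed.

Lemma hom_id (P : {group gT}) : P \subset S -> homF P (fconj 1).
Proof. by case: fusF => _ [_ homS _ _ _] /homS; apply. Qed.

Lemma Fconj_refl (P : {group gT}) : P \subset S -> Fconj homF P P.
Proof.
move=> sPS; apply/existsP; exists (fconj 1); rewrite hom_id //=.
by rewrite (eq_imset _ fconj1E) imset_id.
Qed.

Lemma Fconj_sym P Q : Fconj homF P Q -> Fconj homF Q P.
Proof.
case/existsP=> phi /andP[hP /eqP <-]; case: fusF => _ [_ _ _ _ homV].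
have [psi /andP[hQ /forall_inP psiK]] := homV _ _ hP.
apply/existsP; exists psi; rewrite hQ -imset_comp /=.
by rewrite (eq_in_imset (g := id)) ?imset_id // => x /psiK /eqP.
Qed.

Lemma Fconj_trans P Q R : Fconj homF P Q -> Fconj homF Q R -> Fconj homF P R.
Proof.
case/existsP=> phi /andP[hP /eqP defQ]; case/existsP=> psi /andP[hQ /eqP <-].
case: fusF => _ [_ _ homM _ _]; apply/existsP; exists (fcomp psi phi).
rewrite (homM _ Q) ?defQ //= -defQ -imset_comp.
by apply/eqP/eq_imset => x; rewrite ffunE.
Qed.

Lemma card_Fconj P Q : Fconj homF P Q -> #|Q| = #|P|.
Proof. by case/existsP=> phi /andP[hP /eqP <-]; apply: card_hom_im hP. Qed.

Lemma cyclic_Fconj P Q : Fconj homF P Q -> cyclic P -> cyclic Q.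
Proof.
case/existsP=> phi /andP[hP /eqP <-] /cyclicP[x defP].
have Px : x \in P by rewrite defP cycle_id.
by apply/cyclicP; exists (phi x); rewrite -(hom_cycle hP Px) -defP.
Qed.

Lemma Fconj_proper_card R (D Q : {group gT}) :
  Fconj homF R D -> D \subset Q -> ~~ Fconj homF R Q -> #|R| < #|Q|.
Proof.
move=> FRD sDQ; apply: contraR; rewrite -leqNgt => leQR.
suff <- : D = Q :> {set gT} by [].
by apply/eqP; rewrite eqEcard sDQ (card_Fconj FRD).
Qed.

Definition nFconj_in (R Q : {set gT}) :=
  #|[set D : {group gT} | Fconj homF R D && (D \subset Q)]|.

End FusionSystem.

Section Biset.
Variables (gT : finGroupType) (S : {group gT}).
Variable homF : {set gT} -> {ffun gT -> gT} -> bool.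
Hypothesis fusF : is_fusion_system S homF.
Variables (Omega : finType) (to : action (setX S S) Omega).
Hypothesis stableF : F_stable_biset homF to.
Hypothesis genF : F_generated_biset homF to.
Variable p : nat.
Hypothesis pS : p.-group S.
Hypothesis p_ndvd : ~~ (p %| #|Omega| %/ #|S|).

Lemma acts_setT (A : {set gT * gT}) : A \subset setX S S -> [acts A, on setT | to].
Proof.
move=> sAD; apply/subsetP=> a /(subsetP sAD) Da.
by rewrite inE Da inE; apply/subsetP=> x; rewrite !inE.
Qed.

Definition nfix (u v : gT) := #|'Fix_to[(u, v)]|.

Lemma norbits_mul_card (P Q : {group gT}) : P \subset S -> Q \subset S ->
  (norbits to P Q * (#|P| * #|Q|))%N = \sum_(u in P) \sum_(v in Q) nfix u v.
Proof.
move=> sPS sQS; have sPQ : setX P Q \subset setX S S by rewrite setXS.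
have -> : norbits to P Q = #|orbit to (setX P Q) @: setT|.
  by apply: eq_card=> T; apply/imsetP/imsetP=> -[x _ ->]; exists x.
rewrite -cardsX -(Frobenius_Cauchy (acts_setT sPQ)) pair_big_dep /=.
apply: eq_big => [[u v] | [u v] _]; first by rewrite !inE.
by rewrite setTI.
Qed.

Lemma nfix_hom (P Q : {group gT}) phi psi u v :
  homF P phi -> homF Q psi -> u \in P -> v \in Q -> nfix (phi u) (psi v) = nfix u v.
Proof.
move=> hP hQ Pu Qv; have [f [/bij_inj injf fE]] := stableF hP hQ.
rewrite /nfix -(card_preimset _ injf); apply: eq_card => x.
have PQuv : (u, v) \in setX P Q by rewrite !inE Pu Qv.
by rewrite !inE !sub1set !inE -[(phi u, psi v)]/(prodf phi psi (u, v)) -fE // (inj_eq injf).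
Qed.

Lemma afix_Delta x u v : u \in S -> v \in S -> to x (u, v) = x ->
  exists P phi, [/\ homF P phi, u \in P & v = phi u].
Proof.
move=> Su Sv xuv; have [P [phi [hP stabE]]] := genF x.
have : (u, v) \in 'C_(setX S S)[x | to] by rewrite !inE /= Su Sv sub1set inE xuv eqxx.
by rewrite stabE => /imsetP[w Pw [-> ->]]; exists P, phi.
Qed.

Lemma nfix_gt0_Fconj u v : u \in S -> v \in S -> 0 < nfix u v -> Fconj homF <[u]> <[v]>.
Proof.
move=> Su Sv /card_gt0P[x /afix1P/(afix_Delta Su Sv)[P [phi [hP Pu ->]]]].
case: fusF => _ [_ _ _ homR _].
have hPu : homF <[u]> phi by apply: (homR (Group (hom_group fusF hP))); rewrite ?cycle_subG.
by apply/existsP; exists phi; rewrite hPu (hom_cycle fusF hP Pu) /=.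
Qed.

Let K := setX_group [1 gT]%G S.

Lemma sub_right_dom : K \subset setX S S.
Proof. by rewrite setXS ?sub1G. Qed.

Lemma right_astab1 x : 'C_K[x | to] = 1.
Proof.
apply/trivgP/subsetP=> -[a t]; rewrite !inE /= sub1set inE.
case/and3P=> /andP[/eqP-> St] _ /eqP xt.
have [P [phi [hP _ ->]]] := afix_Delta (group1 S) St xt.
by rewrite (hom1 fusF hP).
Qed.

Lemma card_right_orbits : #|Omega| = (#|orbit to K @: setT| * #|S|)%N.
Proof.
rewrite -cardsT -(acts_sum_card_orbit (acts_setT sub_right_dom)) -sum_nat_const.
apply: eq_bigr => _ /imsetP[x _ ->].
have := card_orbit_in_stab to x sub_right_dom.
by rewrite right_astab1 cards1 muln1 cardsX cards1 mul1n.
Qed.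

Lemma setact_right_orbit x u : u \in S ->
  to^* (orbit to K x) (u, 1) = orbit to K (to x (u, 1)).
Proof.
move=> Su; have Su1 : (u, 1) \in setX S S by rewrite !inE Su group1.
have commute t : t \in S -> to (to x (1, t)) (u, 1) = to (to x (u, 1)) (1, t).
  move=> St; have S1t : (1, t) \in setX S S by rewrite !inE St group1.
  by rewrite -!actMin // !mulg_pair !mulg1 !mul1g.
apply/setP=> y; apply/imsetP/orbitP => [[_ /orbitP[[a t] Kat <-] ->] | [[a t] Kat <-]];
  move: Kat; rewrite !inE /= => /andP[/eqP-> St].
  by exists (1, t); rewrite ?commute // !inE eqxx.
by exists (to x (1, t)); [apply: mem_orbit; rewrite !inE eqxx | rewrite commute].
Qed.

Lemma exists_right_orbit_fixed u : u \in S -> exists x, to x (u, 1) \in orbit to K x.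
Proof.
move=> Su; pose H := setX_group <[u]>%G [1 gT]%G.
have sHD : H \subset setX S S by rewrite setXS ?cycle_subG ?sub1G.
have pH : p.-group H.
  by rewrite /pgroup cardsX cards1 muln1; apply: pgroupS pS; rewrite cycle_subG.
have actsH : [acts H, on orbit to K @: setT | to^*].
  apply/subsetP=> -[a b] Hab; rewrite inE (subsetP sHD) //=.
  move: Hab; rewrite !inE /= => /andP[/cycleP[i ->] /eqP->].
  apply/subsetP=> _ /imsetP[x _ ->]; rewrite !inE setact_right_orbit ?groupX //.
  exact: imset_f.
have [noFix | [_ /setIP[/imsetP[x _ ->] /afixP fixH]]] :=
  set_0Vmem 'Fix_(orbit to K @: setT | to^*)(H).
  have := pgroup_fix_mod pH actsH; rewrite noFix cards0 mod0n => /eqP dvd_p.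
  by move: p_ndvd; rewrite card_right_orbits mulnK ?cardG_gt0 // /dvdn dvd_p.
have uH : (u, 1) \in H by rewrite !inE cycle_id eqxx.
by exists x; rewrite -[orbit _ _ x](fixH _ uH) /= setact_right_orbit ?orbit_refl.
Qed.

Lemma nfix_gt0_exists u : u \in S -> exists2 v, v \in S & 0 < nfix u v.
Proof.
move=> Su; have [x /orbitP[[a t]]] := exists_right_orbit_fixed Su.
rewrite !inE /= => /andP[/eqP-> St] xtu.
have Su1 : (u, 1) \in setX S S by rewrite !inE Su group1.
have S1t : (1, t) \in setX S S by rewrite !inE group1 St.
have S1t' : (1, t^-1) \in setX S S by rewrite !inE group1 groupV.
exists t^-1; rewrite ?groupV // /nfix; apply/card_gt0P; exists x; apply/afix1P.
have -> : (u, t^-1) = (u, 1) * (1, t^-1) by rewrite mulg_pair mulg1 mul1g.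
rewrite actMin // -xtu -actMin // mulg_pair mulg1 mulgV.
exact: act1.
Qed.

Definition nfix_gen (P D : {set gT}) := \sum_(v | generator D v) \sum_(u in P) nfix u v.

Lemma nfix_gen_Fconj (P D : {group gT}) D' :
  P \subset S -> Fconj homF D D' -> nfix_gen P D = nfix_gen P D'.
Proof.
move=> sPS /existsP[phi /andP[hD /eqP <-]].
have genD v : generator D v -> v \in D by move/eqP->; apply: cycle_id.
rewrite /nfix_gen [RHS](eq_bigl (fun v => v \in [set v | generator (phi @: D) v])).
  2: by move=> v; rewrite inE.
rewrite -(hom_generator fusF hD) big_imset /= => [|v w]; last first.
  by rewrite !inE => /genD Dv /genD Dw; apply: (hom_inj fusF hD).
apply: eq_big => [v | v /genD Dv]; first by rewrite inE.
by apply: eq_bigr => u Pu; rewrite -{2}[u]fconj1E (nfix_hom (hom_id fusF sPS) hD).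
Qed.

Lemma nfix_gen_gt0 (P D : {group gT}) : P \subset S -> D \subset S ->
  0 < nfix_gen P D -> exists2 U : {group gT}, U \subset P & Fconj homF D U.
Proof.
move=> sPS sDS; rewrite lt0n sum_nat_eq0 negb_forall => /existsP[v].
rewrite negb_imply sum_nat_eq0 negb_forall => /andP[/eqP defD /existsP[u]].
rewrite negb_imply -lt0n => /andP[Pu /nfix_gt0_Fconj].
have Sv : v \in S by rewrite (subsetP sDS) // defD cycle_id.
move=> /(_ (subsetP sPS u Pu) Sv) Fuv; exists <[u]>%G; first by rewrite cycle_subG.
by rewrite defD; apply: Fconj_sym fusF _ _ Fuv.
Qed.

Lemma nfix_gen_cyclic_gt0 (D : {group gT}) : D \subset S -> cyclic D -> 0 < nfix_gen D D.
Proof.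
move=> sDS /cyclicP[u defD]; have Du : u \in D by rewrite defD cycle_id.
have [v Sv nfix_uv] := nfix_gt0_exists (subsetP sDS u Du).
have FDv : Fconj homF D <[v]> by rewrite defD nfix_gt0_Fconj // (subsetP sDS).
rewrite (nfix_gen_Fconj sDS FDv) /nfix_gen (bigD1 v) ?generator_cycle //= (bigD1 u) //=.
by rewrite -addnA ltn_addr.
Qed.

End Biset.

Section Transversal.
Variables (gT : finGroupType) (S : {group gT}).
Variable homF : {set gT} -> {ffun gT -> gT} -> bool.
Hypothesis fusF : is_fusion_system S homF.
Variable reps : seq {group gT}.
Hypothesis transF : Fclass_transversal S homF reps.

Let k := size reps.
Let Pi (i : 'I_k) : {group gT} := nth 1%G reps i.
Let cyclic_reps := [set i : 'I_k | cyclic (Pi i)].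
Let nC := #|cyclic_reps|.
Let R (c : 'I_nC) : {group gT} := Pi (enum_val c).

Lemma sub_reps i : Pi i \subset S.
Proof. by case: transF => /(all_nthP 1%G)/(_ i (ltn_ord i)). Qed.

Lemma cyclic_R c : cyclic (R c).
Proof. by have := enum_valP c; rewrite inE. Qed.

Lemma Fconj_R_inj a b : Fconj homF (R a) (R b) -> a = b.
Proof.
case: transF => _ _ /(_ _ _ (ltn_ord _) (ltn_ord _)) uniqF /uniqF eq_ab.
exact/enum_val_inj/val_inj.
Qed.

Lemma Fconj_R_exists (D : {group gT}) : D \subset S -> cyclic D -> exists c, Fconj homF (R c) D.
Proof.
move=> sDS cycD; case: transF => _ /(_ D sDS) /hasP[P /(nthP 1%G)[i lt_ik defP] FDP] _.
have cyc_i : Ordinal lt_ik \in cyclic_reps.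
  by rewrite inE /Pi /= defP (cyclic_Fconj fusF FDP).
exists (enum_rank_in cyc_i (Ordinal lt_ik)); rewrite /R enum_rankK_in //.
by rewrite /Pi /= defP (Fconj_sym fusF).
Qed.

Lemma card_cyclic_reps : n_cyclic_Fclasses S homF = nC.
Proof.
pose cls (Q : {set gT}) := [set D in cyclic_subgroups S | Fconj homF Q D].
have clsE (Q Q' : {set gT}) : Fconj homF Q Q' -> cls Q = cls Q'.
  move=> FQQ'; apply/setP=> D; rewrite !inE; apply: andb_id2l => _.
  apply/idP/idP => [FQD | FQ'D].
    exact: (Fconj_trans fusF (Fconj_sym fusF FQQ') FQD).
  exact: (Fconj_trans fusF FQQ' FQ'D).
have R_cyc c : R c \in cyclic_subgroups S by rewrite inE sub_reps cyclic_R.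
rewrite -[RHS]card_ord -(card_in_imset (f := cls \o R)) => [|a b _ _ /= clsab]; last first.
  have : R b \in cls (R b) by rewrite inE R_cyc (Fconj_refl fusF) ?sub_reps.
  by rewrite -clsab inE => /andP[_ /Fconj_R_inj].
congr #|pred_of_set _|; apply/setP=> X; apply/imsetP/imsetP=> [[Q] | [c _ ->]].
  rewrite inE => /andP[sQS cycQ] ->; have [c FcQ] := Fconj_R_exists sQS cycQ.
  by exists c; rewrite //= (clsE _ _ FcQ).
by exists (R c).
Qed.

Lemma sum_by_Fclasses (Q : {group gT}) (G : {group gT} -> nat) : Q \subset S ->
    (forall D D' : {group gT}, D \subset S -> Fconj homF D D' -> G D = G D') ->
  \sum_(D : {group gT} | cyclic D && (D \subset Q)) G D =
  \sum_(c < nC) nFconj_in homF (R c) Q * G (R c).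
Proof.
move=> sQS G_Fconj.
have G_class (D : {group gT}) : cyclic D -> D \subset Q ->
    G D = \sum_(c | Fconj homF (R c) D) G (R c).
  move=> cycD sDQ; have [c0 Fc0D] := Fconj_R_exists (subset_trans sDQ sQS) cycD.
  rewrite (big_pred1 c0) => [|c]; first by rewrite (G_Fconj _ _ (sub_reps _) Fc0D).
  apply/idP/eqP => [FcD | ->] //; apply: Fconj_R_inj.
  exact: (Fconj_trans fusF FcD (Fconj_sym fusF Fc0D)).
rewrite (eq_bigr (fun D : {group gT} => \sum_(c | Fconj homF (R c) D) G (R c))); last first.
  by move=> D /andP[]; apply: G_class.
rewrite (exchange_big_dep predT) //=.
apply: eq_bigr => c _; rewrite -sum_nat_const /nFconj_in; apply: eq_bigl => D.
rewrite inE andbC; case FcD: (Fconj homF (R c) D) => //=.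
by rewrite (cyclic_Fconj fusF FcD) ?cyclic_R.
Qed.

Variables (Omega : finType) (to : action (setX S S) Omega).
Hypothesis stableF : F_stable_biset homF to.
Hypothesis genF : F_generated_biset homF to.
Variable p : nat.
Hypothesis pS : p.-group S.
Hypothesis p_ndvd : ~~ (p %| #|Omega| %/ #|S|).

Lemma norbits_Fclass_sum i j :
  (norbits to (Pi i) (Pi j) * (#|Pi i| * #|Pi j|))%N =
  \sum_(c < nC) nFconj_in homF (R c) (Pi j) * nfix_gen to (Pi i) (R c).
Proof.
rewrite norbits_mul_card ?sub_reps // exchange_big sum_by_cycles.
by apply: sum_by_Fclasses (sub_reps j) _ => D D' _; apply: nfix_gen_Fconj (sub_reps i).
Qed.

Lemma nFconj_in_R_gt0 a b : 0 < nFconj_in homF (R a) (R b) -> a != b -> #|R a| < #|R b|.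
Proof.
case/card_gt0P=> D /[!inE] /andP[FaD sDb] neq_ab; apply: (Fconj_proper_card fusF FaD sDb).
by apply: contraNN neq_ab => /Fconj_R_inj ->.
Qed.

Lemma nfix_gen_R_gt0 a b : 0 < nfix_gen to (R b) (R a) -> a != b -> #|R a| < #|R b|.
Proof.
case/(nfix_gen_gt0 fusF genF (sub_reps _) (sub_reps _))=> U sUb FaU neq_ab.
apply: (Fconj_proper_card fusF FaU sUb).
by apply: contraNN neq_ab => /Fconj_R_inj ->.
Qed.

Local Open Scope ring_scope.
Import GRing.Theory Num.Theory.

Let X : 'M[rat]_(k, nC) := \matrix_(i, c) ((nfix_gen to (Pi i) (R c))%:R / #|Pi i|%:R).
Let Y : 'M[rat]_(nC, k) := \matrix_(c, j) ((nFconj_in homF (R c) (Pi j))%:R / #|Pi j|%:R).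

Lemma orbit_matrix_factor : orbit_matrix to reps = X *m Y.
Proof.
apply/matrixP=> i j; rewrite !mxE.
have [Pi_gt0 Pj_gt0] := (cardG_gt0 (Pi i), cardG_gt0 (Pi j)).
have cardPij : (#|Pi i| * #|Pi j|)%:R != 0 :> rat by rewrite pnatr_eq0 -lt0n muln_gt0 Pi_gt0.
rewrite -[LHS](mulfK cardPij) -natrM norbits_Fclass_sum natr_sum mulr_suml.
apply: eq_bigr => c _; rewrite !mxE !natrM; field.
by rewrite !pnatr_eq0 -!lt0n Pi_gt0 Pj_gt0.
Qed.

Lemma row_free_Y : row_free Y.
Proof.
apply: (row_free_colsub (g := enum_val)).
apply: (row_free_weight_triangular (w := fun c => #|R c|)) => [a b | a]; rewrite !mxE.
  by rewrite natr_div_neq0 ?cardG_gt0 //; apply: nFconj_in_R_gt0.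
rewrite natr_div_neq0 ?cardG_gt0 //; apply/card_gt0P; exists (R a).
by rewrite inE (Fconj_refl fusF) ?sub_reps //=; apply: subxx.
Qed.

Lemma row_free_trX : row_free X^T.
Proof.
apply: (row_free_colsub (g := enum_val)).
apply: (row_free_weight_triangular (w := fun c => #|R c|)) => [a b | a]; rewrite !mxE.
  by rewrite natr_div_neq0 ?cardG_gt0 //; apply: nfix_gen_R_gt0.
rewrite natr_div_neq0 ?cardG_gt0 //.
exact: (nfix_gen_cyclic_gt0 fusF stableF genF pS p_ndvd (sub_reps _) (cyclic_R a)).
Qed.

Lemma rank_orbit_matrix : \rank (orbit_matrix to reps) = n_cyclic_Fclasses S homF.
Proof.
rewrite orbit_matrix_factor mxrankMfree ?row_free_Y // -mxrank_tr.
by rewrite card_cyclic_reps; apply/eqP/row_free_trX.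
Qed.

End Transversal.

Unset Implicit Arguments.

Theorem theorem1p3 (gT : finGroupType) (p : nat) (S : {group gT})
    (homF : {set gT} -> {ffun gT -> gT} -> bool)
    (Omega : finType) (to : action (setX S S) Omega)
    (reps : seq {group gT}) :
  prime p -> p.-group S ->
  saturated_fusion_system S homF p ->
  characteristic_biset homF to p ->
  Fclass_transversal S homF reps ->
  \rank (orbit_matrix to reps) = n_cyclic_Fclasses S homF.
Proof.
move=> _ pS [fusF _ _] [stableF genF p_ndvd] transF.
exact: (rank_orbit_matrix fusF transF stableF genF pS p_ndvd).
Qed.
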